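(* Let $n,m,k$ be positive integers, let $X\in\mathbb{C}^{n\times n}$ be Hermitian, let $\Lambda:\mathbb{C}^{n\times n}\to\mathbb{C}^{m\times m}$ be a linear map and $Y\in\mathbb{C}^{m\times m}$. Consider the rank-constrained problem \[ (\mathrm{P})\qquad \max_{\rho\in\mathbb{C}^{n\times n}}\ \operatorname{Tr}(X\rho)\quad\text{s.t.}\quad \Lambda(\rho)=Y,\ \operatorname{Tr}(\rho)=1,\ \rho\ge 0,\ \operatorname{rank}(\rho)\le k . \] Let $\mathcal{H}_A=\mathcal{H}_B=\mathbb{C}^n\otimes\mathbb{C}^k$, let $\widetilde{X}=X\otimes\mathbb{1}_k$, and let $\widetilde{\Lambda}(\cdot)=\Lambda[\operatorname{Tr}_2(\cdot)]$, where $\operatorname{Tr}_2$ is the partial trace over the factor $\mathbb{C}^k$. Then the problem (P) is equivalent to (has the same optimal value as) the conic program \[ (\mathrm{C})\qquad \max_{\Phi_{AB}}\ \operatorname{Tr}\big[(\widetilde{X}_A\otimes\mathbb{1}_B)\Phi_{AB}\big]\quad\text{s.t.}\quad \Phi_{AB}\in\mathrm{SEP},\ \operatorname{Tr}(\Phi_{AB})=1,\ V_{AB}\Phi_{AB}=\Phi_{AB},\ (\widetilde{\Lambda}_A\otimes\mathrm{id}_B)(\Phi_{AB})=Y\otimes\operatorname{Tr}_A(\Phi_{AB}). \]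
   Context: $\mathrm{SEP}$ denotes the cone of (unnormalized) separable operators on $\mathcal{H}_A\otimes\mathcal{H}_B$, i.e. the convex hull of $\{M_A\otimes N_B: M_A\ge0,\ N_B\ge 0\}$ with $M_A,N_B$ complex positive semidefinite operators on $\mathcal{H}_A,\mathcal{H}_B$. $V_{AB}$ is the swap operator on $\mathcal{H}_A\otimes\mathcal{H}_B$, $V_{AB}\ket{\psi_1}\ket{\psi_2}=\ket{\psi_2}\ket{\psi_1}$. A subscript $A$ (resp. $B$) indicates that an operator or map acts on $\mathcal{H}_A$ (resp. $\mathcal{H}_B$); $\mathrm{id}_B$ is the identity map on operators on $\mathcal{H}_B$; $\operatorname{Tr}_A$ is the partial trace over $\mathcal{H}_A$, so both sides of the last constraint are operators on $\mathbb{C}^m\otimes\mathcal{H}_B$. *)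

From HB Require Import structures.
From mathcomp Require Import all_boot all_order all_algebra.
From mathcomp Require Import all_classical all_reals.
From mathcomp Require Import ereal.
From mathcomp Require Import complex mxtens.
Set Implicit Arguments. Unset Strict Implicit. Unset Printing Implicit Defensive.
Import Order.TTheory GRing.Theory Num.Theory.
Local Open Scope ring_scope.
Local Open Scope complex_scope.

Section QDefs.
Variable R : realType.
Local Notation C := R[i].

Definition ctr (p q : nat) (A : 'M[C]_(p, q)) : 'M[C]_(q, p) :=
  (map_mx Num.conj A)^T.

Definition is_hermitian (p : nat) (A : 'M[C]_p) : Prop := ctr A = A.

Definition psd (p : nat) (A : 'M[C]_p) : Prop :=
  is_hermitian A /\ forall v : 'cV[C]_p, 0 <= (ctr v *m A *m v) 0 0.

(* Index convention of tensmx: the basis vector e_i (x) e_j of C^p (x) C^q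
   is indexed by mxtens_index (i, j) : 'I_(p * q). *)

Definition ptr2 (p q : nat) (M : 'M[C]_(p * q)) : 'M[C]_p :=
  \matrix_(i, j) \sum_(l < q) M (mxtens_index (i, l)) (mxtens_index (j, l)).

Definition ptr1 (p q : nat) (M : 'M[C]_(p * q)) : 'M[C]_q :=
  \matrix_(i, j) \sum_(l < p) M (mxtens_index (l, i)) (mxtens_index (l, j)).

Definition blk (p q : nat) (b b' : 'I_q) (M : 'M[C]_(p * q)) : 'M[C]_p :=
  \matrix_(i, j) M (mxtens_index (i, b)) (mxtens_index (j, b')).

(* (L (x) id)(M) for a map L : M_p -> M_r acting on the first factor *)
Definition map_tens_id (p r q : nat) (L : 'M[C]_p -> 'M[C]_r)
    (M : 'M[C]_(p * q)) : 'M[C]_(r * q) :=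
  \sum_(b < q) \sum_(b' < q) tensmx (L (blk b b' M)) (delta_mx b b').

Definition swap_op (d : nat) : 'M[C]_(d * d) :=
  \sum_(a < d) \sum_(b < d) delta_mx (mxtens_index (b, a)) (mxtens_index (a, b)).

(* cone of (unnormalized) separable operators on C^p (x) C^q:
   convex hull of {M (x) N | M, N >= 0}, i.e. finite sums of such products *)
Definition SEP (p q : nat) (Phi : 'M[C]_(p * q)) : Prop :=
  exists s : seq ('M[C]_p * 'M[C]_q),
    (forall x, x \in s -> psd x.1 /\ psd x.2) /\
    Phi = \sum_(x <- s) tensmx x.1 x.2.

Definition reC (z : C) : R := complex.Re z.

Definition opt_P (n m k : nat) (X : 'M[C]_n) (Lam : 'M[C]_n -> 'M[C]_m)
    (Y : 'M[C]_m) : \bar R :=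
  ereal_sup [set v : \bar R | exists rho : 'M[C]_n,
     [/\ Lam rho = Y, \tr rho = 1, psd rho, (\rank rho <= k)%N
       & v = (reC (\tr (X *m rho)))%:E]].

Definition opt_C (n m k : nat) (X : 'M[C]_n) (Lam : 'M[C]_n -> 'M[C]_m)
    (Y : 'M[C]_m) : \bar R :=
  let Xt : 'M[C]_(n * k) := tensmx X (1%:M : 'M[C]_k) in
  let Lamt : 'M[C]_(n * k) -> 'M[C]_m := fun M => Lam (ptr2 M) in
  ereal_sup [set v : \bar R | exists Phi : 'M[C]_((n * k) * (n * k)),
     [/\ SEP Phi, \tr Phi = 1, swap_op _ *m Phi = Phi,
         map_tens_id Lamt Phi = tensmx Y (ptr1 Phi)
       & v = (reC (\tr (tensmx Xt (1%:M : 'M[C]_(n * k)) *m Phi)))%:E]].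

End QDefs.

(* (P) <= (C): since rank rho <= k we can write rho = B B^* with B of size n x k;
   for psi = vec B in C^n (x) C^k we get Tr_2 |psi><psi| = rho, and
   Phi = |psi><psi| (x) |psi><psi| is feasible for (C) with the objective value of rho.

   (C) <= (P): a separable Phi is a sum of terms |u><u| (x) |w><w|.  The identity
     sum_(a,b) |u_a w_b - u_b w_a|^2 = 2 (Tr T - Tr (V T)),   T = |u><u| (x) |w><w|,
   together with Tr (V Phi) = Tr Phi forces u and w to be parallel in every term, so
   Phi = sum_x c_x rho_x (x) rho_x with c_x >= 0 and rho_x rank one.  Taking a block
   of the linear constraint and pairing it with its adjoint yields
   sum_x c_x |f(rho_x)|^2 = 0 for f(rho) = (Lam (Tr_2 rho) - Tr rho Y)_(j,l), so every
   rho_x obeys the constraint.  The normalised marginals Tr_2 rho_x / Tr rho_x are then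
   feasible for (P), and the objective value of Phi is a convex combination of theirs. *)

From HB Require Import structures.
From mathcomp Require Import all_boot all_order all_algebra.
From mathcomp Require Import all_classical all_reals.
From mathcomp Require Import ereal.
From mathcomp Require Import complex mxtens.
From mathcomp Require Import ring.
Import Order.TTheory GRing.Theory Num.Theory.
Local Open Scope ring_scope.
Set Implicit Arguments. Unset Strict Implicit. Unset Printing Implicit Defensive.

Lemma big_mxtens (V : nmodType) p q (F : 'I_(p * q) -> V) :
  \sum_(x < p * q) F x = \sum_(i < p) \sum_(j < q) F (mxtens_index (i, j)).
Proof.
rewrite pair_big (reindex (@mxtens_index p q)) /=; first by apply: eq_bigr => -[].
by exists (@mxtens_unindex p q) => x _; [apply: mxtens_indexK | apply: mxtens_unindexK].
Qed.

(** * Tensor products of matrices *)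

Section TensorProduct.
Variable R : comPzRingType.

Lemma tensmxDl p q r s (A1 A2 : 'M[R]_(p, q)) (B : 'M[R]_(r, s)) :
  (A1 + A2) *t B = A1 *t B + A2 *t B.
Proof. by apply/matrixP => i j; rewrite !mxE mulrDl. Qed.

Lemma tensmxDr p q r s (A : 'M[R]_(p, q)) (B1 B2 : 'M[R]_(r, s)) :
  A *t (B1 + B2) = A *t B1 + A *t B2.
Proof. by apply/matrixP => i j; rewrite !mxE mulrDr. Qed.

Lemma tensmxZl p q r s c (A : 'M[R]_(p, q)) (B : 'M[R]_(r, s)) :
  (c *: A) *t B = c *: (A *t B).
Proof. by apply/matrixP => i j; rewrite !mxE mulrA. Qed.

Lemma tensmxZr p q r s c (A : 'M[R]_(p, q)) (B : 'M[R]_(r, s)) :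
  A *t (c *: B) = c *: (A *t B).
Proof. by apply/matrixP => i j; rewrite !mxE mulrCA. Qed.

Lemma tensmx_suml p q r s I (rr : seq I) (P : pred I) (F : I -> 'M[R]_(p, q))
    (B : 'M[R]_(r, s)) :
  (\sum_(x <- rr | P x) F x) *t B = \sum_(x <- rr | P x) F x *t B.
Proof. by elim/big_rec2: _ => [|x y1 y2 _ <-]; rewrite ?tens0mx ?tensmxDl. Qed.

Lemma tensmx_sumr p q r s I (rr : seq I) (P : pred I) (A : 'M[R]_(p, q))
    (F : I -> 'M[R]_(r, s)) :
  A *t (\sum_(x <- rr | P x) F x) = \sum_(x <- rr | P x) A *t F x.
Proof. by elim/big_rec2: _ => [|x y1 y2 _ <-]; rewrite ?tensmx0 ?tensmxDr. Qed.

Lemma mxtrace_tens p q (A : 'M[R]_p) (B : 'M[R]_q) : \tr (A *t B) = \tr A * \tr B.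
Proof.
rewrite /mxtrace big_mxtens big_distrlr; apply: eq_bigr => i _.
by apply: eq_bigr => j _; rewrite tensmxE.
Qed.

End TensorProduct.

Lemma card_diag_neq0 (F : fieldType) p (d : 'rV[F]_p) :
  (#|support (d ord0)| <= \rank (diag_mx d))%N.
Proof.
set S := support (d ord0).
pose E : 'M[F]_(#|S|, p) := \matrix_(j, i) ((i == enum_val j)%:R / d 0 i).
pose G : 'M[F]_(p, #|S|) := \matrix_(i, j) (i == enum_val j)%:R.
have EdG : E *m diag_mx d *m G = 1%:M.
  rewrite mul_mx_diag; apply/matrixP => j j'.
  rewrite !mxE (bigD1 (enum_val j)) //= big1 ?addr0; last first.
    by move=> i /negPf ni; rewrite !mxE ni !mul0r.
  have /[!inE] dj := enum_valP j.
  rewrite !mxE eqxx mul1r mulVf // mul1r (inj_eq enum_val_inj).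
  by rewrite eq_sym.
rewrite -(mxrank1 F #|S|) -EdG.
exact: leq_trans (mxrankM_maxl _ _) (mxrankM_maxr _ _).
Qed.

Section Quantum.
Variable R : realType.
Local Notation C := R[i].

(** * Positive semidefinite matrices *)

Lemma ctrE p q (A : 'M[C]_(p, q)) i j : ctr A i j = (A j i)^*.
Proof. by rewrite !mxE. Qed.

Lemma ctr_mul p q r (A : 'M[C]_(p, q)) (B : 'M[C]_(q, r)) :
  ctr (A *m B) = ctr B *m ctr A.
Proof.
apply/matrixP => i j; rewrite !mxE rmorph_sum; apply: eq_bigr => l _.
by rewrite !mxE rmorphM mulrC.
Qed.

Lemma ctrK p q (A : 'M[C]_(p, q)) : ctr (ctr A) = A.
Proof. by apply/matrixP => i j; rewrite !ctrE conjCK. Qed.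

Lemma ctrZ p q c (A : 'M[C]_(p, q)) : ctr (c *: A) = c^* *: ctr A.
Proof. by apply/matrixP => i j; rewrite !mxE rmorphM. Qed.

Fact ctr_is_zmod_morphism p q : zmod_morphism (@ctr R p q).
Proof. by move=> A B; apply/matrixP => i j; rewrite !mxE rmorphB. Qed.

HB.instance Definition _ p q :=
  GRing.isZmodMorphism.Build 'M[C]_(p, q) 'M[C]_(q, p) (@ctr R p q)
    (@ctr_is_zmod_morphism p q).

Lemma gram_psd p q (B : 'M[C]_(p, q)) : psd (B *m ctr B).
Proof.
split; first by rewrite /is_hermitian ctr_mul ctrK.
move=> v; rewrite !mulmxA -mulmxA -[ctr B *m v]ctrK ctr_mul ctrK mxE.
by apply: sumr_ge0 => l _; rewrite ctrE mul_conjC_ge0.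
Qed.

Lemma psdZ p c (A : 'M[C]_p) : 0 <= c -> psd A -> psd (c *: A).
Proof.
move=> c_ge0 [hA A_ge0]; split; first by rewrite /is_hermitian ctrZ geC0_conj // hA.
by move=> v; rewrite -scalemxAr -scalemxAl mxE mulr_ge0.
Qed.

Definition ketbra p (v : 'cV[C]_p) : 'M[C]_p := v *m ctr v.

Lemma ketbraE p (v : 'cV[C]_p) a b : ketbra v a b = v a 0 * (v b 0)^*.
Proof. by rewrite mxE big_ord1 ctrE. Qed.

Lemma ketbra0 p : ketbra (0 : 'cV[C]_p) = 0.
Proof. by apply/matrixP => a b; rewrite ketbraE !mxE mul0r. Qed.

Lemma psd_ketbra p (v : 'cV[C]_p) : psd (ketbra v).
Proof. exact: gram_psd. Qed.

Lemma mxtrace_ketbra p (v : 'cV[C]_p) : \tr (ketbra v) = \sum_a `|v a 0| ^+ 2.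
Proof. by apply: eq_bigr => a _; rewrite ketbraE normCK. Qed.

Lemma mxtrace_ketbra_ge0 p (v : 'cV[C]_p) : 0 <= \tr (ketbra v).
Proof. by rewrite mxtrace_ketbra sumr_ge0 // => a _; rewrite exprn_ge0. Qed.

Lemma mxtrace_ketbra_eq0 p (v : 'cV[C]_p) : \tr (ketbra v) = 0 -> v = 0.
Proof.
rewrite mxtrace_ketbra => /psumr_eq0P v0; apply/matrixP => a j.
rewrite [j]ord1 mxE; apply/eqP; rewrite -normr_eq0 -sqrf_eq0.
by rewrite v0 // => b _; rewrite exprn_ge0.
Qed.

Lemma gram_sum_ketbra p q (B : 'M[C]_(p, q)) :
  B *m ctr B = \sum_(l < q) ketbra (col l B).
Proof.
apply/matrixP => a b; rewrite summxE mxE; apply: eq_bigr => l _.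
by rewrite ketbraE !mxE.
Qed.

Lemma psd_spectral p (A : 'M[C]_p) : psd A ->
  exists Q (d : 'rV[C]_p),
    [/\ ctr Q *m Q = 1%:M, A = Q *m diag_mx d *m ctr Q & forall i, 0 <= d 0 i].
Proof.
move=> [hA hpos].
have Aherm : A \is hermsymmx.
  by rewrite qualifE expr0 scale1r; apply/eqP; rewrite -[LHS]hA /ctr map_trmx.
have /hermitian_normalmx/orthomx_spectralP := Aherm.
set P := spectralmx A; set d := spectral_diag A.
have PU : P \is unitarymx by exact: spectral_unitarymx.
have ctrP : ctr P = (P ^t*)%sesqui by rewrite /ctr map_trmx.
rewrite invmx_unitary // -ctrP => eA.
have PP : P *m ctr P = 1%:M by rewrite ctrP; apply/unitarymxP.
exists (ctr P), d; rewrite ctrK; split => // i.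
have := hpos (col i (ctr P)).
suff -> : (ctr (col i (ctr P)) *m A *m col i (ctr P)) 0 0 = d 0 i by [].
have -> : ctr (col i (ctr P)) = row i P by apply/matrixP => a b; rewrite !mxE conjCK.
have DA : P *m A *m ctr P = diag_mx d.
  by rewrite eA !mulmxA PP mul1mx -mulmxA PP mulmx1.
rewrite rowE colE !mulmxA -2!(mulmxA (delta_mx 0 i)) DA -rowE -colE.
by rewrite !mxE eqxx mulr1n.
Qed.

Lemma psd_sum_ketbra p (A : 'M[C]_p) : psd A ->
  exists2 ws : seq 'cV[C]_p, A = \sum_(v <- ws) ketbra v & (size ws <= \rank A)%N.
Proof.
move=> /psd_spectral[Q [d [QQ eA d_ge0]]].
pose w i := sqrtC (d 0 i) *: col i Q.
have Aw : A = \sum_i ketbra (w i).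
  apply/matrixP => a b; rewrite eA summxE mul_mx_diag !mxE; apply: eq_bigr => i _.
  rewrite ketbraE !mxE rmorphM /= (geC0_conj (x := sqrtC _)) ?sqrtC_ge0 //.
  by rewrite mulrACA -expr2 sqrtCK [RHS]mulrCA mulrA.
exists [seq w i | i <- enum (support (d ord0))].
  rewrite big_map big_enum_cond Aw (bigID (support (d ord0))) /=.
  rewrite [X in _ + X]big1 ?addr0; first by apply: eq_bigl => i; rewrite andbT.
  by move=> i /negPn/eqP di; rewrite /w di sqrtC0 scale0r ketbra0.
rewrite size_map -cardE; apply: leq_trans (card_diag_neq0 d) _.
have -> : diag_mx d = ctr Q *m A *m Q.
  by rewrite eA !mulmxA QQ mul1mx -mulmxA QQ mulmx1.
exact: leq_trans (mxrankM_maxl _ _) (mxrankM_maxr _ _).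
Qed.

Lemma sum_ketbra_gram p k (ws : seq 'cV[C]_p) : (size ws <= k)%N ->
  exists B : 'M[C]_(p, k), \sum_(v <- ws) ketbra v = B *m ctr B.
Proof.
move=> ws_k; exists (\matrix_(a, j) (nth 0 ws j) a 0).
rewrite gram_sum_ketbra (big_nth 0) big_mkord.
rewrite (big_ord_widen k (fun j => ketbra (nth 0 ws j)) ws_k) big_mkcond /=.
apply: eq_bigr => j _; case: ifPn => [_|].
  by congr ketbra; apply/matrixP => a b; rewrite !mxE [b]ord1.
rewrite -leqNgt => ws_j; rewrite -(ketbra0 p); congr ketbra.
by apply/matrixP => a b; rewrite !mxE nth_default ?mxE.
Qed.

Lemma psd_gram p k (A : 'M[C]_p) : psd A -> (\rank A <= k)%N ->
  exists B : 'M[C]_(p, k), A = B *m ctr B.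
Proof.
move=> /psd_sum_ketbra[ws -> ws_rk] rk_k.
exact: sum_ketbra_gram (leq_trans ws_rk rk_k).
Qed.

(** * Partial traces *)

Fact ptr2_is_linear p q : linear (@ptr2 R p q).
Proof.
move=> c A B; apply/matrixP => i j; rewrite !mxE big_distrr -big_split /=.
by apply: eq_bigr => l _; rewrite !mxE.
Qed.

HB.instance Definition _ p q :=
  GRing.isLinear.Build C 'M[C]_(p * q) 'M[C]_p _ (@ptr2 R p q) (@ptr2_is_linear p q).

Fact ptr1_is_linear p q : linear (@ptr1 R p q).
Proof.
move=> c A B; apply/matrixP => i j; rewrite !mxE big_distrr -big_split /=.
by apply: eq_bigr => l _; rewrite !mxE.
Qed.

HB.instance Definition _ p q :=
  GRing.isLinear.Build C 'M[C]_(p * q) 'M[C]_q _ (@ptr1 R p q) (@ptr1_is_linear p q).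

Lemma mxtrace_ptr2 p q (M : 'M[C]_(p * q)) : \tr (ptr2 M) = \tr M.
Proof. by rewrite [RHS]/mxtrace big_mxtens; apply: eq_bigr => i _; rewrite mxE. Qed.

Lemma ptr1_tens p q (A : 'M[C]_p) (B : 'M[C]_q) : ptr1 (A *t B) = \tr A *: B.
Proof.
apply/matrixP => i j; rewrite !mxE mulr_suml; apply: eq_bigr => l _.
by rewrite tensmxE.
Qed.

Lemma mxtrace_tens1_mul p q (X : 'M[C]_p) (M : 'M[C]_(p * q)) :
  \tr ((X *t (1%:M : 'M[C]_q)) *m M) = \tr (X *m ptr2 M).
Proof.
rewrite /mxtrace big_mxtens; apply: eq_bigr => a _; rewrite [RHS]mxE.
under eq_bigr => l _ do rewrite mxE big_mxtens.
rewrite exchange_big /=; apply: eq_bigr => a' _.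
rewrite mxE mulr_sumr; apply: eq_bigr => l _.
rewrite (bigD1 l) //= big1 ?addr0; last first.
  by move=> l' /negPf nl; rewrite tensmxE mxE eq_sym nl mulr0 mul0r.
by rewrite tensmxE mxE eqxx mulr1.
Qed.

Definition vec p q (B : 'M[C]_(p, q)) : 'cV[C]_(p * q) :=
  \col_x B (mxtens_unindex x).1 (mxtens_unindex x).2.

Definition unvec p q (u : 'cV[C]_(p * q)) : 'M[C]_(p, q) :=
  \matrix_(i, l) u (mxtens_index (i, l)) 0.

Lemma vecK p q : cancel (@vec p q) (@unvec p q).
Proof. by move=> B; apply/matrixP => i j; rewrite !mxE mxtens_indexK. Qed.

Lemma ptr2_ketbra p q (u : 'cV[C]_(p * q)) :
  ptr2 (ketbra u) = unvec u *m ctr (unvec u).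
Proof.
by apply/matrixP => i j; rewrite !mxE; apply: eq_bigr => l _; rewrite ketbraE !mxE.
Qed.

Definition reduced_state p q (u : 'cV[C]_(p * q)) : 'M[C]_p :=
  (\tr (ketbra u))^-1 *: ptr2 (ketbra u).

Lemma psd_reduced_state p q (u : 'cV[C]_(p * q)) : psd (reduced_state u).
Proof.
by apply: psdZ; rewrite ?invr_ge0 ?mxtrace_ketbra_ge0 // ptr2_ketbra; apply: gram_psd.
Qed.

Lemma rank_reduced_state p q (u : 'cV[C]_(p * q)) : (\rank (reduced_state u) <= q)%N.
Proof.
rewrite /reduced_state ptr2_ketbra scalemxAl.
exact: leq_trans (mxrankM_maxl _ _) (rank_leq_col _).
Qed.

Lemma mxtrace_reduced_state p q (u : 'cV[C]_(p * q)) :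
  \tr (ketbra u) != 0 -> \tr (reduced_state u) = 1.
Proof. by move=> tu; rewrite mxtraceZ mxtrace_ptr2 mulVf. Qed.

Section MapTensId.
Variables (p r q : nat) (L : {linear 'M[C]_p -> 'M[C]_r}).

Fact map_tens_id_is_linear : linear (@map_tens_id R p r q L).
Proof.
move=> c A B; rewrite /map_tens_id scaler_sumr -big_split; apply: eq_bigr => b _.
rewrite scaler_sumr -big_split; apply: eq_bigr => b' _.
have -> : blk b b' (c *: A + B) = c *: blk b b' A + blk b b' B.
  by apply/matrixP => i j; rewrite !mxE.
by rewrite linearP tensmxDl tensmxZl.
Qed.

HB.instance Definition _ := GRing.isLinear.Build C 'M[C]_(p * q) 'M[C]_(r * q) _
  (map_tens_id L) map_tens_id_is_linear.

Lemma map_tens_id_tens (A : 'M[C]_p) (B : 'M[C]_q) :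
  map_tens_id L (A *t B) = L A *t B.
Proof.
rewrite /map_tens_id [in RHS](matrix_sum_delta B) tensmx_sumr.
apply: eq_bigr => b _; rewrite tensmx_sumr; apply: eq_bigr => b' _.
have -> : blk b b' (A *t B) = B b b' *: A.
  by apply/matrixP => i j; rewrite mxE tensmxE mxE mulrC.
by rewrite linearZ tensmxZl tensmxZr.
Qed.

End MapTensId.

Lemma swap_opE d (a b c e : 'I_d) :
  swap_op R d (mxtens_index (a, b)) (mxtens_index (c, e)) = ((a == e) && (b == c))%:R.
Proof.
have idx_eq x y : (mxtens_index x == mxtens_index y :> 'I_(d * d)) = (x == y).
  exact: (inj_eq (can_inj (@mxtens_indexK _ _))).
rewrite /swap_op summxE (bigD1 b) //= [X in _ + X]big1 ?addr0; last first.
  move=> a' /negPf na; rewrite summxE big1 // => b' _; rewrite mxE.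
  by rewrite !idx_eq !xpair_eqE [b == a']eq_sym na andbF.
rewrite summxE (bigD1 a) //= big1 ?addr0; last first.
  by move=> b' /negPf nb; rewrite mxE !idx_eq !xpair_eqE eq_sym nb.
by rewrite mxE !idx_eq !xpair_eqE !eqxx /= [c == b]eq_sym [e == a]eq_sym andbC.
Qed.

Lemma swap_mulmxE d (M : 'M[C]_(d * d)) a b y :
  (swap_op R d *m M) (mxtens_index (a, b)) y = M (mxtens_index (b, a)) y.
Proof.
rewrite mxE big_mxtens (bigD1 b) //= [X in _ + X]big1 ?addr0; last first.
  move=> c /negPf nc; rewrite big1 // => e _.
  by rewrite swap_opE [b == c]eq_sym nc andbF mul0r.
rewrite (bigD1 a) //= [X in _ + X]big1 ?addr0; last first.
  by move=> e /negPf ne; rewrite swap_opE eq_sym ne mul0r.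
by rewrite swap_opE !eqxx mul1r.
Qed.

Lemma swap_mul_ketbra_tens d (u : 'cV[C]_d) :
  swap_op R d *m (ketbra u *t ketbra u) = ketbra u *t ketbra u.
Proof.
apply/matrixP => x y; case: (mxtens_indexP x) => a b.
rewrite swap_mulmxE; case: (mxtens_indexP y) => c e.
by rewrite !tensmxE !ketbraE; ring.
Qed.

Lemma mxtrace_swap_mul d (M : 'M[C]_(d * d)) :
  \tr (swap_op R d *m M) =
  \sum_(a < d) \sum_(b < d) M (mxtens_index (b, a)) (mxtens_index (a, b)).
Proof.
rewrite /mxtrace big_mxtens; apply: eq_bigr => a _.
by apply: eq_bigr => b _; rewrite swap_mulmxE.
Qed.

(** * Swap-invariant separable operators *)

Lemma sep_sum_ketbra p q (Phi : 'M[C]_(p * q)) : SEP Phi ->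
  exists r : seq ('cV[C]_p * 'cV[C]_q), Phi = \sum_(x <- r) ketbra x.1 *t ketbra x.2.
Proof.
move=> [s [s_psd ->]] {Phi}; elim: s s_psd => [|[M N] s IHs] s_psd.
  by exists [::]; rewrite !big_nil.
have [|r er] := IHs; first by move=> x xs; apply: s_psd; rewrite inE xs orbT.
have [/psd_sum_ketbra[us eM _] /psd_sum_ketbra[ws eN _]] := s_psd _ (mem_head _ _).
rewrite /= in eM eN.
exists ([seq (u, w) | u <- us, w <- ws] ++ r).
rewrite big_cat big_cons er big_allpairs /= eM eN tensmx_suml; congr (_ + _).
by apply: eq_bigr => u _; rewrite tensmx_sumr.
Qed.

Lemma antisym_norm_sum d (u w : 'cV[C]_d) :
  \sum_(a < d) \sum_(b < d) `|u a 0 * w b 0 - u b 0 * w a 0| ^+ 2 =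
  2%:R * (\tr (ketbra u *t ketbra w) - \tr (swap_op R d *m (ketbra u *t ketbra w))).
Proof.
pose f (a b : 'I_d) := u a 0 * (u a 0)^* * (w b 0 * (w b 0)^*).
pose g (a b : 'I_d) := u b 0 * (u a 0)^* * (w a 0 * (w b 0)^*).
have -> : \tr (ketbra u *t ketbra w) = \sum_a \sum_b f a b.
  rewrite mxtrace_tens /mxtrace big_distrlr /=; apply: eq_bigr => a _.
  by apply: eq_bigr => b _; rewrite !ketbraE.
have -> : \tr (swap_op R d *m (ketbra u *t ketbra w)) = \sum_a \sum_b g a b.
  rewrite mxtrace_swap_mul; apply: eq_bigr => a _; apply: eq_bigr => b _.
  by rewrite tensmxE !ketbraE.
transitivity (\sum_a \sum_b ((f a b + f b a) - (g a b + g b a))).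
  apply: eq_bigr => a _; apply: eq_bigr => b _.
  by rewrite normCK rmorphB !rmorphM /f /g; ring.
under eq_bigr => a _ do rewrite sumrB !big_split /=.
rewrite sumrB !big_split /= [\sum_i \sum_j f j i]exchange_big.
by rewrite [\sum_i \sum_j g j i]exchange_big /=; ring.
Qed.

Lemma swap_fixed_parallel d (r : seq ('cV[C]_d * 'cV[C]_d)) :
  let Phi := \sum_(x <- r) ketbra x.1 *t ketbra x.2 in
  swap_op R d *m Phi = Phi ->
  forall x, x \in r -> forall a b, x.1 a 0 * x.2 b 0 = x.1 b 0 * x.2 a 0.
Proof.
move=> Phi swapPhi x xr a b; apply/eqP; rewrite -subr_eq0 -normr_eq0 -sqrf_eq0.
have sq_ge0 (y : 'cV[C]_d * 'cV[C]_d) a' b' :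
  0 <= `|y.1 a' 0 * y.2 b' 0 - y.1 b' 0 * y.2 a' 0| ^+ 2 by rewrite exprn_ge0.
have : \sum_(y <- r) \sum_(a < d) \sum_(b < d)
    `|y.1 a 0 * y.2 b 0 - y.1 b 0 * y.2 a 0| ^+ 2 == 0.
  under eq_bigr => y _ do rewrite antisym_norm_sum.
  rewrite -mulr_sumr sumrB.
  rewrite -!(raddf_sum (@mxtrace C (d * d))) -mulmx_sumr swapPhi.
  by rewrite subrr mulr0.
rewrite psumr_eq0 => [/allP/(_ x xr)/eqP x0|y _]; last first.
  by do 2![apply: sumr_ge0 => ? _].
have xa0 := psumr_eq0P (fun a' _ => sumr_ge0 _ (fun b' _ => sq_ge0 x a' b')) x0.
by apply/eqP; apply: (psumr_eq0P _ (xa0 a isT)) => // b' _; apply: sq_ge0.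
Qed.

Lemma ketbra_tens_parallel p (u w : 'cV[C]_p) :
  (forall a b, u a 0 * w b 0 = u b 0 * w a 0) ->
  ketbra u *t ketbra w = (\tr (ketbra w) / \tr (ketbra u)) *: (ketbra u *t ketbra u).
Proof.
move=> uw; have [/mxtrace_ketbra_eq0 ->|tu] := eqVneq (\tr (ketbra u)) 0.
  by rewrite ketbra0 !tens0mx scaler0.
set c := _ / _; suff ew : ketbra w = c *: ketbra u by rewrite ew tensmxZr.
apply/(scalerI tu); rewrite scalerA /c mulrCA divff // mulr1.
apply/matrixP => b b'; rewrite !mxE /mxtrace !mulr_suml !big_ord1 !ctrE.
apply: eq_bigr => a _; rewrite !ketbraE.
transitivity ((u a 0 * w b 0) * (u a 0 * w b' 0)^*); first by rewrite rmorphM; ring.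
by rewrite uw (uw a b') rmorphM; ring.
Qed.

Lemma sep_swap_fixed_sum d (Phi : 'M[C]_(d * d)) :
  SEP Phi -> swap_op R d *m Phi = Phi ->
  exists r : seq (C * 'cV[C]_d), (forall x, x \in r -> 0 <= x.1) /\
    Phi = \sum_(x <- r) x.1 *: (ketbra x.2 *t ketbra x.2).
Proof.
move=> /sep_sum_ketbra[r ->] /swap_fixed_parallel par.
exists [seq (\tr (ketbra x.2) / \tr (ketbra x.1), x.1) | x <- r]; split.
  by move=> _ /mapP[x _ ->]; rewrite divr_ge0 ?mxtrace_ketbra_ge0.
by rewrite big_map; apply: eq_big_seq => x xr; apply: ketbra_tens_parallel; apply: par.
Qed.

Lemma tens_sum_eq_termwise d m (L : {linear 'M[C]_d -> 'M[C]_m}) (Y : 'M[C]_m)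
    (r : seq (C * 'M[C]_d)) :
  (forall x, x \in r -> 0 <= x.1 /\ is_hermitian x.2) ->
  \sum_(x <- r) x.1 *: (L x.2 *t x.2) = \sum_(x <- r) x.1 *: ((\tr x.2 *: Y) *t x.2) ->
  forall x, x \in r -> x.1 != 0 -> L x.2 = \tr x.2 *: Y.
Proof.
move=> r_psd E x xr x1_neq0; apply/matrixP => j l.
pose f M := L M j l - \tr M * Y j l.
have f_sum (a : C * 'M[C]_d -> C) :
    f (\sum_(y <- r) a y *: y.2) = \sum_(y <- r) a y * f y.2.
  rewrite /f linear_sum summxE raddf_sum mulr_suml -sumrB; apply: eq_bigr => y _.
  by rewrite linearZ /= mxtraceZ mxE; ring.
have E1 : \sum_(y <- r) (y.1 * f y.2) *: y.2 = 0.
  apply/matrixP => c c'; move/eqP: E; rewrite -subr_eq0 -sumrB => /eqP/matrixP.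
  move=> /(_ (mxtens_index (j, c)) (mxtens_index (l, c'))); rewrite summxE mxE => E.
  rewrite summxE [RHS]mxE -[RHS]E; apply: eq_bigr => y _.
  by rewrite !mxE !mxtens_indexK /f /=; ring.
have E2 : \sum_(y <- r) (y.1 * (f y.2)^*) *: y.2 = 0.
  transitivity (ctr (\sum_(y <- r) (y.1 * f y.2) *: y.2)); last by rewrite E1 raddf0.
  rewrite raddf_sum; apply: eq_big_seq => y yr.
  have [y1_ge0 y2_herm] := r_psd y yr.
  by rewrite /= ctrZ y2_herm rmorphM /= (geC0_conj y1_ge0).
have E3 : \sum_(y <- r) y.1 * ((f y.2)^* * f y.2) = 0.
  under eq_bigr do rewrite mulrA.
  by rewrite -f_sum E2 /f linear0 mxtrace0 mxE mul0r subr0.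
have term_ge0 y : y \in r -> 0 <= y.1 * ((f y.2)^* * f y.2).
  by move=> yr; rewrite mulr_ge0 ?(r_psd y yr).1 // mulrC mul_conjC_ge0.
move/eqP: E3; rewrite big_seq psumr_eq0 => [/allP/(_ x xr)|]; last exact: term_ge0.
rewrite xr /= !mulf_eq0 conjC_eq0 orbb (negPf x1_neq0) /=.
by rewrite /f subr_eq0 => /eqP ->; rewrite mxE mulrC.
Qed.

(** * The two optimal values *)

Lemma reC_sum I (r : seq I) (F : I -> C) :
  reC (\sum_(i <- r) F i) = \sum_(i <- r) reC (F i).
Proof. exact: raddf_sum. Qed.

Lemma reC_mul_ge0 (p c : C) : 0 <= p -> reC (p * c) = reC p * reC c.
Proof.
move=> p_ge0; have := ger0_Im p_ge0; case: p p_ge0 => a b /= _ ->; case: c => c e /=.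
by rewrite mul0r subr0.
Qed.

Lemma convex_le_ereal_sup (S : set (\bar R)) (I : eqType) (r : seq I) (p c : I -> C) :
  (forall i, i \in r -> 0 <= p i) -> \sum_(i <- r) p i = 1 ->
  (forall i, i \in r -> p i != 0 -> S (reC (c i))%:E) ->
  ((reC (\sum_(i <- r) p i * c i))%:E <= ereal_sup S)%E.
Proof.
move=> p_ge0 p_sum1 Sc.
have [i0 i0r pi0] : exists2 i, i \in r & p i != 0.
  have : \sum_(i <- r) p i != 0 by rewrite p_sum1 oner_neq0.
  rewrite big_seq psumr_neq0 // => /hasP[i ir /andP[_]].
  by rewrite lt0r => /andP[pi _]; exists i.
have c_le_sup i : i \in r -> p i != 0 -> ((reC (c i))%:E <= ereal_sup S)%E.
  by move=> ir pi; apply: ereal_sup_ubound; apply: Sc.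
case E : (ereal_sup S) => [s| |]; [|by rewrite leey|].
  2: by have := c_le_sup _ i0r pi0; rewrite E leeNy_eq.
have re_sum1 : \sum_(i <- r) reC (p i) = 1 by rewrite -reC_sum p_sum1.
rewrite lee_fin reC_sum -[s]mul1r -re_sum1 mulr_suml big_seq [leRHS]big_seq.
apply: ler_sum => i ir.
rewrite reC_mul_ge0 ?p_ge0 //; have [->|pi] := eqVneq (p i) 0; first by rewrite !mul0r.
rewrite ler_wpM2l //; first by move: (p_ge0 i ir); rewrite lecE => /andP[].
by have := c_le_sup i ir pi; rewrite E lee_fin.
Qed.

Lemma mxtrace_objective_tens n k (X : 'M[C]_n) (A B : 'M[C]_(n * k)) :
  \tr ((X *t (1%:M : 'M[C]_k)) *t (1%:M : 'M[C]_(n * k)) *m (A *t B)) =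
  \tr (X *m ptr2 A) * \tr B.
Proof. by rewrite tensmx_mul mxtrace_tens mul1mx mxtrace_tens1_mul. Qed.

Lemma opt_P_le_opt_C n m k (X : 'M[C]_n) (Lam : {linear 'M[C]_n -> 'M[C]_m})
    (Y : 'M[C]_m) :
  (opt_P k X Lam Y <= opt_C k X Lam Y)%E.
Proof.
apply: ereal_sup_le => _ [rho [Lrho tr_rho psd_rho rk_rho ->]].
have [B eB] := psd_gram psd_rho rk_rho.
pose Psi := ketbra (vec B).
have ptr2_Psi : ptr2 Psi = rho by rewrite ptr2_ketbra vecK eB.
have tr_Psi : \tr Psi = 1 by rewrite -mxtrace_ptr2 ptr2_Psi.
exists (Psi *t Psi); split.
- exists [:: (Psi, Psi)]; rewrite big_seq1; split=> // x.
  by rewrite inE => /eqP -> /=; split; apply: psd_ketbra.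
- by rewrite mxtrace_tens tr_Psi mulr1.
- exact: swap_mul_ketbra_tens.
- rewrite -[fun M => _]/(Lam \o @ptr2 R n k) map_tens_id_tens /=.
  by rewrite ptr2_Psi Lrho ptr1_tens tr_Psi scale1r.
- by rewrite mxtrace_objective_tens ptr2_Psi tr_Psi mulr1.
Qed.

Lemma constraint_termwise n m k (Lam : {linear 'M[C]_n -> 'M[C]_m}) (Y : 'M[C]_m)
    (r : seq (C * 'cV[C]_(n * k))) :
  let Phi := \sum_(x <- r) x.1 *: (ketbra x.2 *t ketbra x.2) in
  (forall x, x \in r -> 0 <= x.1) ->
  map_tens_id (fun M => Lam (ptr2 M)) Phi = Y *t ptr1 Phi ->
  forall x, x \in r -> x.1 != 0 -> Lam (ptr2 (ketbra x.2)) = \tr (ketbra x.2) *: Y.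
Proof.
move=> Phi r_ge0; rewrite -[fun M => _]/(Lam \o @ptr2 R n k) !linear_sum => constr x xr.
pose r' := [seq (y.1, ketbra y.2) | y <- r].
apply: (@tens_sum_eq_termwise _ _ (Lam \o @ptr2 R n k) Y r' _ _ (x.1, ketbra x.2)).
- by move=> _ /mapP[y yr ->]; split; [apply: r_ge0 | exact: (psd_ketbra _).1].
- rewrite !big_map; transitivity (\sum_(y <- r)
      map_tens_id (Lam \o @ptr2 R n k) (y.1 *: (ketbra y.2 *t ketbra y.2))).
    by apply: eq_bigr => y _; rewrite linearZ /= map_tens_id_tens.
  rewrite constr tensmx_sumr; apply: eq_bigr => y _.
  by rewrite linearZ /= ptr1_tens !tensmxZr tensmxZl.
- exact: (map_f (fun y => (y.1, ketbra y.2))).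
Qed.

Lemma opt_C_le_opt_P n m k (X : 'M[C]_n) (Lam : {linear 'M[C]_n -> 'M[C]_m})
    (Y : 'M[C]_m) :
  (opt_C k X Lam Y <= opt_P k X Lam Y)%E.
Proof.
apply: ge_ereal_sup => _ [Phi [sep_Phi tr_Phi swap_Phi constr_Phi ->]].
have [r [r_ge0 ePhi]] := sep_swap_fixed_sum sep_Phi swap_Phi.
rewrite ePhi in tr_Phi constr_Phi *.
pose t (x : C * 'cV[C]_(n * k)) := \tr (ketbra x.2).
have -> : \tr ((X *t 1%:M) *t 1%:M *m \sum_(x <- r) x.1 *: (ketbra x.2 *t ketbra x.2)) =
    \sum_(x <- r) x.1 * t x ^+ 2 * \tr (X *m reduced_state x.2).
  rewrite mulmx_sumr linear_sum; apply: eq_bigr => x _ /=.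
  rewrite -scalemxAr mxtraceZ mxtrace_objective_tens -scalemxAr mxtraceZ /t.
  (* if the trace vanishes, both sides do, as [0^-1 = 0] *)
  have [->|tx] := eqVneq (\tr (ketbra x.2)) 0; last by field.
  by rewrite invr0; ring.
apply: convex_le_ereal_sup => [x xr||x xr].
- by rewrite mulr_ge0 ?r_ge0 ?exprn_ge0 ?mxtrace_ketbra_ge0.
- rewrite -tr_Phi linear_sum; apply: eq_bigr => x _.
  by rewrite /= mxtraceZ mxtrace_tens expr2.
rewrite mulf_eq0 negb_or expf_eq0 /= => /andP[x1_neq0 tx].
have Lx := constraint_termwise r_ge0 constr_Phi xr x1_neq0.
exists (reduced_state x.2); split=> //.
- by rewrite linearZ /= Lx scalerA mulVf ?scale1r.
- exact: mxtrace_reduced_state tx.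
- exact: psd_reduced_state.
- exact: rank_reduced_state.
Qed.

End Quantum.

Theorem theorem1 (R : realType) (n m k : nat)
    (hn : (0 < n)%N) (hm : (0 < m)%N) (hk : (0 < k)%N)
    (X : 'M[R[i]]_n) (hX : is_hermitian X)
    (Lam : {linear 'M[R[i]]_n -> 'M[R[i]]_m}) (Y : 'M[R[i]]_m) :
  opt_P k X Lam Y = opt_C k X Lam Y.
Proof. by apply/le_anti/andP; split; [apply: opt_P_le_opt_C | apply: opt_C_le_opt_P]. Qed.
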